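(* Let $d\ge3$ and $k_d=d^2-1$. Let $M_\Sigma$ be the $(d-1)\times(d-1)$ lower-triangular matrix with entries, for $1\le i,j\le d-1$: $(M_\Sigma)_{ij}=0$ if $j>i$; $(M_\Sigma)_{i1}=\frac{2}{i(i+1)}$; $(M_\Sigma)_{ij}=\frac{1}{i(i+1)}$ if $1<j<i$; $(M_\Sigma)_{ii}=\frac{i}{i+1}$ if $i>1$. Let $M_{k_d}=M_\Sigma\oplus\mathbb{I}_{d(d-1)}$ (a $k_d\times k_d$ block-diagonal row-stochastic matrix). Then $\operatorname{rank}_{\mathrm{psd}}(M_{k_d})=d^2-1$.
   Context: The psd rank of a nonnegative $n\times m$ matrix $M$, $\operatorname{rank}_{\mathrm{psd}}(M)$, is the smallest $r$ such that there exist $r\times r$ positive semidefinite matrices $R_1,\dots,R_n$ and $C_1,\dots,C_m$ with $M_{ij}=\operatorname{Tr}(R_iC_j)$ for all $i,j$. *)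

From HB Require Import structures.
From mathcomp Require Import all_boot all_order all_algebra.
Set Implicit Arguments. Unset Strict Implicit. Unset Printing Implicit Defensive.
Import Order.TTheory GRing.Theory Num.Theory.
Local Open Scope ring_scope.

Definition psd (R : realFieldType) (r : nat) (A : 'M[R]_r) : Prop :=
  A^T = A /\ forall x : 'cV[R]_r, 0 <= (x^T *m A *m x) 0 0.

Definition has_psd_factorization (R : realFieldType) (n m : nat)
    (M : 'M[R]_(n, m)) (r : nat) : Prop :=
  exists (Rs : 'I_n -> 'M[R]_r) (Cs : 'I_m -> 'M[R]_r),
    (forall i, psd (Rs i)) /\ (forall j, psd (Cs j)) /\
    (forall i j, M i j = \tr (Rs i *m Cs j)).

Definition is_psd_rank (R : realFieldType) (n m : nat)
    (M : 'M[R]_(n, m)) (r : nat) : Prop :=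
  has_psd_factorization M r /\
  (forall r', has_psd_factorization M r' -> (r <= r')%N).

Definition M_Sigma (R : realFieldType) (d : nat) : 'M[R]_(d.-1) :=
  \matrix_(i < d.-1, j < d.-1)
    let a := i.+1 in let b := j.+1 in
    if (a < b)%N then 0
    else if b == 1%N then 2%:R / (a * a.+1)%:R
    else if b == a then a%:R / a.+1%:R
    else 1 / (a * a.+1)%:R.

(* M_{k_d} = M_Sigma (+) I_{d(d-1)}, of size (d-1) + d(d-1) = d^2 - 1. *)
Definition M_kd (R : realFieldType) (d : nat) : 'M[R]_(d.-1 + d * d.-1) :=
  block_mx (M_Sigma R d) 0 0 1%:M.

(* The psd rank of an n x n matrix is at most n: a nonnegative matrix factors
   through diagonal psd matrices.  For the lower bound, take a psd factorization
   M i j = tr (R_i C_j) of size r.  For psd A and B, tr (A B) >= 0 with equality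
   only if A B = 0, so M i j = 0 for i < j forces C_j R_i = 0, while M i i <> 0
   forces C_i R_i <> 0.  Choosing a nonzero entry (a_i, b_i) of each C_i R_i, the
   n x n matrix with entries (C_j R_i) a_j b_i is triangular with nonzero
   diagonal, and it factors through r-dimensional vectors, so n <= r.  The
   matrix M_{k_d} is triangular with positive diagonal, hence has psd rank
   exactly its size d^2 - 1. *)
From HB Require Import structures.
From mathcomp Require Import all_boot all_order all_algebra.
From mathcomp Require Import reals.
From mathcomp Require Import ring lra zify.
Import Order.TTheory GRing.Theory Num.Theory.
Local Open Scope ring_scope.

Lemma quadratic_ge0_linear_coef_eq0 (R : realFieldType) (q s : R) :
  (forall t, 0 <= 2 * t * s + t * t * q) -> s = 0.
Proof.
move=> hq; have q_ge0 : 0 <= q by have := hq 1; have := hq (-1); lra.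
have q1_gt0 : 0 < q + 1 by lra.
(* t = -s/(q+1) avoids dividing by a possibly vanishing q. *)
pose t := - s / (q + 1).
have ht : t * (q + 1) = - s by rewrite mulfVK // gt_eqF.
have : 0 <= (2 * t * s + t * t * q) * ((q + 1) * (q + 1)).
  by apply: mulr_ge0; [exact: hq | nra].
have -> : (2 * t * s + t * t * q) * ((q + 1) * (q + 1)) =
          2 * (t * (q + 1)) * s * (q + 1) + (t * (q + 1)) * (t * (q + 1)) * q by ring.
rewrite ht; nra.
Qed.

Section PsdForm.
Set Implicit Arguments. Unset Strict Implicit.
Variables (R : realFieldType) (r : nat).
Implicit Types (A B : 'M[R]_r) (x y w : 'cV[R]_r).

Definition form A x y := (x^T *m A *m y) 0 0.

Lemma formDl A x y z : form A (x + y) z = form A x z + form A y z.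
Proof. by rewrite /form linearD /= !mulmxDl mxE. Qed.

Lemma formDr A x y z : form A z (x + y) = form A z x + form A z y.
Proof. by rewrite /form !mulmxDr mxE. Qed.

Lemma formZl A a x y : form A (a *: x) y = a * form A x y.
Proof. by rewrite /form linearZ /= -!scalemxAl mxE. Qed.

Lemma formZr A a x y : form A y (a *: x) = a * form A y x.
Proof. by rewrite /form -!scalemxAr mxE. Qed.

Lemma formC A x y : A^T = A -> form A x y = form A y x.
Proof.
move=> symA; rewrite /form -[in LHS](trmxK (x^T *m A *m y)) [LHS]mxE.
by rewrite !trmx_mul trmxK symA mulmxA.
Qed.

Lemma form_delta_l A i y : form A (delta_mx i 0) y = (A *m y) i 0.
Proof. by rewrite /form trmx_delta -mulmxA -rowE mxE. Qed.

Lemma form_delta A i j : form A (delta_mx i 0) (delta_mx j 0) = A i j.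
Proof. by rewrite form_delta_l -colE mxE. Qed.

Lemma form_line A x y t : A^T = A ->
  form A (x + t *: y) (x + t *: y) =
  form A x x + 2 * t * form A x y + t * t * form A y y.
Proof. by move=> symA; rewrite !formDl !formDr !formZl !formZr (formC x y symA); ring. Qed.

Lemma mxtrace_mul_outer A w : \tr (A *m (w *m w^T)) = form A w w.
Proof. by rewrite mulmxA mxtrace_mulC mulmxA /mxtrace big_ord1. Qed.

Lemma psd_sym A i j : psd A -> A i j = A j i.
Proof. by case=> symA _; rewrite -{1}symA mxE. Qed.

Lemma psd_diag_ge0 A k : psd A -> 0 <= A k k.
Proof. by case=> _ posA; rewrite -form_delta; apply: posA. Qed.

(* Test A against x + t e_i: the linear coefficient in t must vanish. *)
Lemma psd_form_eq0 A x : psd A -> form A x x = 0 -> A *m x = 0.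
Proof.
move=> [symA posA] Ax0; apply/matrixP => i j; rewrite (ord1 j) [RHS]mxE.
rewrite -form_delta_l (formC _ _ symA); apply: (@quadratic_ge0_linear_coef_eq0 _ (A i i)) => t.
by have := posA (x + t *: delta_mx i 0); rewrite -/(form _ _ _) form_line // Ax0 form_delta add0r.
Qed.

Lemma psd_eq0 B : psd B -> (forall k, B k k = 0) -> B = 0.
Proof.
move=> psdB diag0; apply/matrixP => i j.
have /matrixP/(_ i 0) := psd_form_eq0 psdB (etrans (form_delta B j j) (diag0 j)).
by rewrite -colE !mxE.
Qed.

(* One step of symmetric Gaussian elimination: subtract from B the rank-one psd
   matrix that agrees with it on row and column k. *)
Definition peel B k := B - (B k k)^-1 *: (col k B *m (col k B)^T).

Lemma peelE B k i j : peel B k i j = B i j - (B k k)^-1 * (B i k * B j k).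
Proof. by rewrite !mxE big_ord1 !mxE. Qed.

Lemma form_peel B k x : B^T = B ->
  form (peel B k) x x =
  form B x x - (B k k)^-1 * (form B x (delta_mx k 0) * form B x (delta_mx k 0)).
Proof.
move=> symB; rewrite /form /peel mulmxBr mulmxBl mxE [X in _ + X]mxE; congr (_ - _).
rewrite -scalemxAr -scalemxAl mxE; congr (_ * _).
rewrite !mulmxA -(mulmxA (x^T *m col k B)) mxE big_ord1 colE !mulmxA; congr (_ * _).
by rewrite trmx_mul symB; apply: formC.
Qed.

Lemma psd_peel B k : psd B -> 0 < B k k -> psd (peel B k).
Proof.
move=> psdB Bkk_gt0; have [symB posB] := psdB; split.
  by apply/matrixP => i j; rewrite mxE !peelE (psd_sym i j psdB) [B i k * _]mulrC.
move=> x; rewrite -/(form _ _ _) form_peel //.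
set s := form B x (delta_mx k 0); set c := (B k k)^-1.
have cB : c * B k k = 1 by rewrite mulVf ?gt_eqF.
have := posB (x + (- s * c) *: delta_mx k 0).
rewrite -/(form _ _ _) form_line // form_delta -/s.
have -> : form B x x + 2 * (- s * c) * s + - s * c * (- s * c) * B k k =
          form B x x - 2 * c * (s * s) + c * (s * s) * (c * B k k) by ring.
by rewrite cB; lra.
Qed.

Definition nz_cols B := #|[set j | [exists i, B i j != 0]]|.

Lemma nz_cols_peel B k : psd B -> B k k != 0 -> (nz_cols (peel B k) < nz_cols B)%N.
Proof.
move=> psdB Bkk_neq0; apply/proper_card/properP; split.
  apply/subsetP => j; rewrite !inE => /existsP[i]; apply: contraNT => /existsPn col0.
  have Bj0 l : B l j = 0 by apply/eqP/negbNE/col0.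
  by rewrite peelE Bj0 (psd_sym j k psdB) Bj0 !mulr0 subr0 eqxx.
exists k; rewrite !inE; first by apply/existsP; exists k.
by apply/existsPn => i; rewrite peelE mulrCA mulVf // mulr1 subrr eqxx.
Qed.

(* Induction on the number of nonzero columns of B, peeling off rank-one
   pieces w w^T for which tr (A w w^T) = form A w w. *)
Lemma psd_mxtrace_mul A B : psd A -> psd B ->
  0 <= \tr (A *m B) /\ (\tr (A *m B) = 0 -> A *m B = 0).
Proof.
move=> psdA; have [n] := ubnP (nz_cols B); elim: n B => // n IH B ltBn psdB.
have [k Bkk_neq0 | diag0] := pickP (fun k => B k k != 0); last first.
  by rewrite (psd_eq0 psdB) ?mulmx0 ?mxtrace0 // => k; apply/eqP/negbFE/diag0.
have Bkk_gt0 : 0 < B k k by rewrite lt_def Bkk_neq0 psd_diag_ge0.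
set c := (B k k)^-1; set w := col k B.
have c_gt0 : 0 < c by rewrite invr_gt0.
have Aww_ge0 : 0 <= form A w w by apply: psdA.2.
have [tr_ge0 tr_eq0] := IH _ (leq_trans (nz_cols_peel psdB Bkk_neq0) ltBn)
  (psd_peel psdB Bkk_gt0).
have trE : \tr (A *m B) = \tr (A *m peel B k) + c * form A w w.
  by rewrite -mxtrace_mul_outer -mxtraceZ scalemxAr -mxtraceD -mulmxDr subrK.
rewrite trE; split; first by rewrite addr_ge0 // mulr_ge0 // ltW.
move/eqP; rewrite (paddr_eq0 tr_ge0 (mulr_ge0 (ltW c_gt0) Aww_ge0)).
rewrite mulf_eq0 (gt_eqF c_gt0) /= => /andP[/eqP/tr_eq0 AB0 /eqP/(psd_form_eq0 psdA) Aw0].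
by rewrite -(subrK (c *: (w *m w^T)) B) mulmxDr AB0 -scalemxAr mulmxA Aw0 mul0mx scaler0 addr0.
Qed.

Lemma psd_diag_mx (v : 'rV[R]_r) : (forall k, 0 <= v 0 k) -> psd (diag_mx v).
Proof.
move=> v_ge0; split; first exact: tr_diag_mx.
move=> x; rewrite mul_mx_diag mxE; apply: sumr_ge0 => k _.
by rewrite !mxE mulrAC -expr2 mulr_ge0 ?sqr_ge0.
Qed.

End PsdForm.

Section PsdRankBounds.
Set Implicit Arguments. Unset Strict Implicit.
Variable R : realFieldType.

Lemma trig_products_size_le n r (Rs Cs : 'I_n -> 'M[R]_r) :
  (forall i j : 'I_n, (i < j)%N -> Cs j *m Rs i = 0) ->
  (forall i, Cs i *m Rs i != 0) -> (n <= r)%N.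
Proof.
move=> trig0 diag_neq0.
have entry_neq0 i : exists ab : 'I_r * 'I_r, (Cs i *m Rs i) ab.1 ab.2 != 0.
  apply/existsP; apply: contraNT (diag_neq0 i) => /existsPn entries0.
  by apply/eqP/matrixP => a b; have := entries0 (a, b); rewrite negbK => /eqP ->; rewrite mxE.
have [f f_neq0] := fin_all_exists entry_neq0.
pose U : 'M[R]_(n, r) := \matrix_(i, k) Rs i k (f i).2.
pose V : 'M[R]_(n, r) := \matrix_(j, k) Cs j (f j).1 k.
have UVE i j : (U *m V^T) i j = (Cs j *m Rs i) (f j).1 (f i).2.
  by rewrite !mxE; apply: eq_bigr => k _; rewrite !mxE mulrC.
have UV_unit : U *m V^T \in unitmx.
  rewrite unitmxE unitfE det_trig; last first.
    by apply/is_trig_mxP => i j ltij; rewrite UVE trig0 // mxE.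
  by apply/prodf_neq0 => i _; rewrite UVE.
by rewrite -(mxrank_unit UV_unit) (leq_trans (mxrankM_maxl U V^T)) ?rank_leq_col.
Qed.

Lemma trig_psd_factorization_size_ge n r (M : 'M[R]_n) :
  is_trig_mx M -> (forall i, M i i != 0) -> has_psd_factorization M r -> (n <= r)%N.
Proof.
move=> /is_trig_mxP trigM diag_neq0 [Rs [Cs [psdR [psdC ME]]]].
apply: (trig_products_size_le (Rs := Rs) (Cs := Cs)) => [i j ltij | i].
  by apply: (psd_mxtrace_mul (psdC j) (psdR i)).2; rewrite mxtrace_mulC -ME trigM.
apply: contra (diag_neq0 i) => /eqP CR0.
by rewrite ME mxtrace_mulC CR0 mxtrace0.
Qed.

Lemma nonneg_has_psd_factorization n (M : 'M[R]_n) :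
  (forall i j, 0 <= M i j) -> has_psd_factorization M n.
Proof.
move=> M_ge0; exists (fun i => diag_mx (delta_mx 0 i)), (fun j => diag_mx (col j M)^T).
split; [|split] => [i | j | i j]; first by apply: psd_diag_mx => k; rewrite mxE ler0n.
  by apply: psd_diag_mx => k; rewrite !mxE.
rewrite mul_diag_mx /mxtrace (bigD1 i) //= big1 => [|k ki].
  by rewrite !mxE !eqxx mul1r mulr1n addr0.
by rewrite !mxE (negbTE ki) andbF mul0r.
Qed.

End PsdRankBounds.

Section MKd.
Variables (R : realFieldType) (d : nat).

Lemma M_Sigma_ge0 i j : 0 <= M_Sigma R d i j.
Proof. by rewrite mxE /=; repeat case: ifP => _; rewrite ?divr_ge0 ?ler0n ?ler01. Qed.

Lemma M_Sigma_trig : is_trig_mx (M_Sigma R d).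
Proof. by apply/is_trig_mxP => i j ltij; rewrite mxE /= ltnS ltij. Qed.

Lemma M_Sigma_diag_neq0 i : M_Sigma R d i i != 0.
Proof.
rewrite mxE /= ltnn eqxx.
by case: ifP => _; rewrite mulf_neq0 ?invr_eq0 ?pnatr_eq0 ?muln_eq0.
Qed.

Lemma M_kd_ge0 i j : 0 <= M_kd R d i j.
Proof.
rewrite /M_kd; case: (split_ordP i) => i' ->; case: (split_ordP j) => j' ->.
- by rewrite block_mxEul M_Sigma_ge0.
- by rewrite block_mxEur mxE.
- by rewrite block_mxEdl mxE.
- by rewrite block_mxEdr mxE ler0n.
Qed.

Lemma M_kd_trig : is_trig_mx (M_kd R d).
Proof. by rewrite is_trig_block_mx // eqxx M_Sigma_trig scalar_mx_is_trig. Qed.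

Lemma M_kd_diag_neq0 i : M_kd R d i i != 0.
Proof.
rewrite /M_kd; case: (split_ordP i) => i' ->.
  by rewrite block_mxEul M_Sigma_diag_neq0.
by rewrite block_mxEdr mxE eqxx oner_eq0.
Qed.

End MKd.

Theorem mainTheorem11 (R : realType) (d : nat) (hd : (3 <= d)%N) :
  is_psd_rank (M_kd R d) (d ^ 2 - 1)%N.
Proof.
have -> : (d ^ 2 - 1 = d.-1 + d * d.-1)%N by case: d hd => // n _; lia.
split; first exact/nonneg_has_psd_factorization/M_kd_ge0.
move=> r; apply: (trig_psd_factorization_size_ge (M_kd_trig R d)); exact: M_kd_diag_neq0.
Qed.
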